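(* Let $x\in\mathcal{T}$ and let $x^*$ be its condensed form. Then the equivalence class of $x$ under warping identification is $$[x] := \{y\in\mathcal{T} : \delta(x,y)=0\} = \{y\in\mathcal{T} : y \succ x^*\}.$$
   Context: A time series of length $n\ge1$ is a finite real sequence $x=(x_1,\dots,x_n)$; $\mathcal{T}$ is the set of all time series of finite length. For $m,n\in\mathbb{N}$, a warping path of order $m\times n$ is a sequence $p=(p_1,\dots,p_\ell)$ of points in $[m]\times[n]$ ($[n]=\{1,\dots,n\}$) with $p_1=(1,1)$, $p_\ell=(m,n)$, $p_{l+1}-p_l\in\{(1,0),(0,1),(1,1)\}$; $\mathcal{P}_{m,n}$ is the set of these. The dtw-distance of $x$ (length $m$) and $y$ (length $n$) is $\delta(x,y)=\min_{p\in\mathcal{P}_{m,n}}\big(\sum_{(i,j)\in p}(x_i-y_j)^2\big)^{1/2}$. A time series $x'$ is an expansion of $x=(x_1,\dots,x_n)$, written $x'\succ x$ (equivalently $x\prec x'$, $x$ is a compression of $x'$), if there are integers $\alpha_1,\dots,\alpha_n\ge1$ such that $x'=(\underbrace{x_1,\dots,x_1}_{\alpha_1},\dots,\underbrace{x_n,\dots,x_n}_{\alpha_n})$. A time series is irreducible if no two consecutive elements are equal (equivalently, it is not an expansion of a shorter time series). The condensed form $x^*$ of $x$ is the (unique) irreducible time series with $x\succ x^*$, obtained by collapsing each maximal run of consecutive equal values to a single element. *)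

From Stdlib Require Import Reals List ClassicalEpsilon.
Open Scope R_scope.
Import ListNotations.

(* A time series is a finite, non-empty real sequence; we use lists with
   the side condition [x <> []] (1-indexed entries x_i = nth (i-1) x 0). *)
Definition ts := list R.
Definition is_ts (x : ts) : Prop := x <> [].

Definition at1 (x : ts) (i : nat) : R := nth (i - 1) x 0.

Definition wstep (a b : nat * nat) : Prop :=
  (fst b = S (fst a) /\ snd b = snd a) \/
  (fst b = fst a /\ snd b = S (snd a)) \/
  (fst b = S (fst a) /\ snd b = S (snd a)).

Fixpoint steps_ok (p : list (nat * nat)) : Prop :=
  match p with
  | a :: ((b :: _) as q) => wstep a b /\ steps_ok q
  | _ => True
  end.

Definition warping_path (m n : nat) (p : list (nat * nat)) : Prop :=
  p <> [] /\
  hd (0%nat, 0%nat) p = (1%nat, 1%nat) /\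
  last p (0%nat, 0%nat) = (m, n) /\
  steps_ok p /\
  Forall (fun ij => (1 <= fst ij <= m)%nat /\ (1 <= snd ij <= n)%nat) p.

Definition path_cost (x y : ts) (p : list (nat * nat)) : R :=
  fold_right (fun ij acc => (at1 x (fst ij) - at1 y (snd ij))^2 + acc) 0 p.

Definition is_min_cost (x y : ts) (c : R) : Prop :=
  (exists p, warping_path (length x) (length y) p /\ path_cost x y p = c) /\
  (forall p, warping_path (length x) (length y) p -> c <= path_cost x y p).

(* dtw-distance: square root of the minimal cost (the minimum exists since
   P_{m,n} is finite and nonempty). *)
Definition dtw (x y : ts) : R :=
  sqrt (epsilon (inhabits 0) (fun c => is_min_cost x y c)).

Definition expansion (x' x : ts) : Prop :=
  exists alpha : list nat,
    length alpha = length x /\ Forall (fun a => (1 <= a)%nat) alpha /\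
    x' = flat_map (fun pa => repeat (fst pa) (snd pa)) (combine x alpha).

Fixpoint irreducible (x : ts) : Prop :=
  match x with
  | a :: ((b :: _) as q) => a <> b /\ irreducible q
  | _ => True
  end.

(* condensed form: collapse maximal runs of equal consecutive values *)
Fixpoint condense (x : ts) : ts :=
  match x with
  | [] => []
  | a :: q =>
      match condense q with
      | b :: r => if Req_EM_T a b then b :: r else a :: b :: r
      | [] => [a]
      end
  end.

(** Since all costs are nonnegative and there are only finitely many warping
    paths, [dtw x y = 0] exactly when some warping path has zero cost, i.e.
    when x and y agree along it.  Walking along such a path, each step either
    stays inside a run of equal values of one series or enters the next run
    of both, so a zero-cost path exists iff x and y have the same condensed
    form.  Finally, y has condensed form [x*] iff y is an expansion of the
    irreducible series [x*]. *)

From Stdlib Require Import Reals List Lia Lra Classical ClassicalEpsilon.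
Open Scope R_scope.
Import ListNotations.

Definition aligned (x y : ts) (p : list (nat * nat)) : Prop :=
  Forall (fun ij => at1 x (fst ij) = at1 y (snd ij)) p.

Lemma path_cost_nonneg x y p : 0 <= path_cost x y p.
Proof.
  induction p as [|[i j] p IH]; simpl; [lra|].
  pose proof (pow2_ge_0 (at1 x i - at1 y j)); lra.
Qed.

Lemma path_cost_eq0 x y p : path_cost x y p = 0 <-> aligned x y p.
Proof.
  unfold aligned; induction p as [|[i j] p IH]; simpl; [split; auto|].
  pose proof (path_cost_nonneg x y p); pose proof (pow2_ge_0 (at1 x i - at1 y j)).
  split.
  - intros Hc; constructor; simpl; [nra | apply IH; lra].
  - intros Hc; inversion Hc as [|? ? Hij Hp]; subst; simpl in Hij.
    rewrite Hij, (proj2 IH Hp); ring.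
Qed.

Lemma last_cons_cons {A} (a b : A) l d : last (a :: b :: l) d = last (b :: l) d.
Proof. reflexivity. Qed.

Lemma last_map_nonempty {A B} (f : A -> B) l d d' :
  l <> [] -> last (map f l) d' = f (last l d).
Proof.
  induction l as [|a [|b l] IH]; intros Hl; [congruence | reflexivity |].
  cbn [map]; rewrite !last_cons_cons; apply IH; discriminate.
Qed.

Lemma steps_ok_map (Q : nat * nat -> Prop) f p :
  Forall Q p -> (forall a b, Q a -> Q b -> wstep a b -> wstep (f a) (f b)) ->
  steps_ok p -> steps_ok (map f p).
Proof.
  intros HQ Hf; induction HQ as [|a p Ha HQ IH]; [now intros|].
  destruct p as [|b p]; [now intros|].
  intros [Hab Hs]; split; [apply Hf; auto; now inversion HQ | exact (IH Hs)].
Qed.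

Lemma steps_ok_monotone h r : steps_ok (h :: r) ->
  Forall (fun b => fst h <= fst b /\ snd h <= snd b)%nat r.
Proof.
  revert h; induction r as [|b r IH]; intros h Hs; [constructor|].
  destruct Hs as [Hw Hs]; constructor.
  - unfold wstep in Hw; lia.
  - eapply Forall_impl; [|exact (IH b Hs)]; intros c Hc; cbv beta in Hc; unfold wstep in Hw; lia.
Qed.

Lemma steps_ok_last_ge h r d : steps_ok (h :: r) ->
  (fst h + snd h + length r <= fst (last (h :: r) d) + snd (last (h :: r) d))%nat.
Proof.
  revert h; induction r as [|b r IH]; intros h Hs; [simpl; lia|].
  destruct Hs as [Hw Hs]; specialize (IH b Hs).
  rewrite last_cons_cons; cbn [length]; unfold wstep in Hw; lia.
Qed.

Lemma warping_path_length m n p : warping_path m n p -> (length p <= m + n)%nat.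
Proof.
  intros [Hne [Hhd [Hl [Hs _]]]]; destruct p as [|h r]; [congruence|].
  simpl in Hhd; subst h.
  pose proof (steps_ok_last_ge _ _ (0, 0)%nat Hs) as H.
  rewrite Hl in H; simpl in H |- *; lia.
Qed.

Definition shift (dx dy : nat) (ij : nat * nat) := (fst ij + dx, snd ij + dy)%nat.
Definition unshift (dx dy : nat) (ij : nat * nat) := (fst ij - dx, snd ij - dy)%nat.

Lemma warping_path_single : warping_path 1 1 [(1, 1)%nat].
Proof. repeat split; try discriminate; repeat constructor. Qed.

Lemma warping_path_cons_shift dx dy m n p :
  (dx <= 1)%nat -> (dy <= 1)%nat -> (1 <= dx + dy)%nat -> warping_path m n p ->
  warping_path (m + dx) (n + dy) ((1, 1)%nat :: map (shift dx dy) p).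
Proof.
  intros Hdx Hdy Hd [Hne [Hhd [Hl [Hs Hr]]]].
  destruct p as [|h r]; [congruence|]; simpl in Hhd; subst h.
  split; [discriminate|]; split; [reflexivity|]; split; [|split].
  - change (last (map (shift dx dy) ((1, 1)%nat :: r)) (0, 0)%nat = (m + dx, n + dy)%nat).
    rewrite (last_map_nonempty _ _ (0, 0)%nat) by discriminate.
    now rewrite Hl.
  - change (wstep (1, 1)%nat (shift dx dy (1, 1)%nat) /\
            steps_ok (map (shift dx dy) ((1, 1)%nat :: r))).
    split; [unfold wstep, shift; simpl; lia|].
    apply steps_ok_map with (Q := fun _ => True); [apply Forall_forall; auto | | exact Hs].
    intros [a1 a2] [b1 b2] _ _; unfold wstep, shift; simpl; lia.
  - constructor; [pose proof (Forall_inv Hr); simpl in *; lia|].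
    apply Forall_map; eapply Forall_impl; [|exact Hr].
    intros [a1 a2]; unfold shift; simpl; lia.
Qed.

Lemma warping_path_exists m n : exists p, warping_path (S m) (S n) p.
Proof.
  induction m as [|m [p Hp]].
  - induction n as [|n [p Hp]]; [eexists; apply warping_path_single|].
    pose proof (warping_path_cons_shift 0 1 _ _ _ ltac:(lia) ltac:(lia) ltac:(lia) Hp) as H.
    rewrite Nat.add_0_r, Nat.add_1_r in H; eauto.
  - pose proof (warping_path_cons_shift 1 0 _ _ _ ltac:(lia) ltac:(lia) ltac:(lia) Hp) as H.
    rewrite Nat.add_0_r, Nat.add_1_r in H; eauto.
Qed.

Lemma warping_path_uncons m n h r : warping_path m n ((1, 1)%nat :: h :: r) ->
  exists dx dy, (dx <= 1 /\ dy <= 1 /\ 1 <= dx + dy)%nat /\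
   Forall (fun b => 1 + dx <= fst b /\ 1 + dy <= snd b)%nat (h :: r) /\
   warping_path (m - dx) (n - dy) (map (unshift dx dy) (h :: r)).
Proof.
  intros [_ [_ [Hl [[Hw Hs] Hr]]]].
  destruct h as [i j]; unfold wstep in Hw; simpl in Hw.
  exists (i - 1)%nat, (j - 1)%nat.
  pose proof (steps_ok_monotone _ _ Hs) as Hmono; simpl in Hmono.
  inversion Hr as [|? ? _ Hr1]; subst.
  assert (HQ : Forall (fun b => 1 + (i - 1) <= fst b /\ 1 + (j - 1) <= snd b)%nat
                 ((i, j) :: r)).
  { constructor; [simpl; lia|].
    eapply Forall_impl; [|exact Hmono]; intros b Hb; cbv beta in Hb; lia. }
  split; [lia|]; split; [exact HQ|].
  split; [discriminate|]; split; [unfold unshift; simpl; f_equal; lia|]; split; [|split].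
  - rewrite (last_map_nonempty _ _ (0, 0)%nat) by discriminate.
    rewrite last_cons_cons in Hl; now rewrite Hl.
  - apply (steps_ok_map _ _ _ HQ); [|exact Hs].
    intros [a1 a2] [b1 b2] Ha Hb; unfold wstep, unshift; simpl in *; lia.
  - apply Forall_map; eapply Forall_impl; [|exact (Forall_and HQ Hr1)].
    intros [a1 a2]; unfold unshift; simpl; lia.
Qed.

Fixpoint lists_upto {A} (s : list A) (k : nat) : list (list A) :=
  match k with
  | O => [[]]
  | S k => [] :: flat_map (fun w => map (fun a => a :: w) s) (lists_upto s k)
  end.

Lemma in_lists_upto {A} (s : list A) k w :
  Forall (fun a => In a s) w -> (length w <= k)%nat -> In w (lists_upto s k).
Proof.
  revert w; induction k as [|k IH]; intros [|a w] Hw Hl; simpl in *; auto; try lia.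
  right; apply in_flat_map; exists w; inversion Hw as [|? ? Ha Hw']; subst.
  split; [apply IH; auto; lia | exact (in_map (fun b => b :: w) _ _ Ha)].
Qed.

Lemma exists_min_in_list {T} (P : T -> Prop) (f : T -> R) (L : list T) :
  (exists p, In p L /\ P p) -> exists p, P p /\ forall q, In q L -> P q -> f p <= f q.
Proof.
  induction L as [|a L IH]; intros [p [Hp HP]]; [destruct Hp|].
  destruct (classic (exists p, In p L /\ P p)) as [HL|HL].
  - destruct (IH HL) as [m [Hm Hmin]].
    destruct (classic (P a /\ f a <= f m)) as [[Ha Hle]|Ha].
    + exists a; split; auto; intros q [<-|Hq] Hq'; [lra|]; specialize (Hmin q Hq Hq'); lra.
    + exists m; split; auto; intros q [<-|Hq] Hq'; [|auto].
      destruct (Rle_lt_dec (f m) (f a)); [auto|]; exfalso; apply Ha; split; [auto|lra].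
  - assert (p = a) as -> by (destruct Hp as [<-|Hp]; [reflexivity | exfalso; eauto]).
    exists a; split; auto; intros q [<-|Hq] Hq'; [lra | exfalso; eauto].
Qed.

Lemma min_cost_exists x y : x <> [] -> y <> [] -> exists c, is_min_cost x y c.
Proof.
  intros hx hy; unfold is_min_cost.
  destruct (length x) as [|m] eqn:Em; [destruct x; simpl in Em; congruence|].
  destruct (length y) as [|n] eqn:En; [destruct y; simpl in En; congruence|].
  set (L := lists_upto (list_prod (seq 1 (S m)) (seq 1 (S n))) (S m + S n)).
  assert (HL : forall p, warping_path (S m) (S n) p -> In p L).
  { intros p Hp; apply in_lists_upto; [|now apply warping_path_length].
    destruct Hp as [_ [_ [_ [_ Hr]]]]; eapply Forall_impl; [|exact Hr].
    intros [i j] [Hi Hj]; apply in_prod; apply in_seq; simpl in *; lia. }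
  destruct (warping_path_exists m n) as [p Hp].
  destruct (exists_min_in_list (warping_path (S m) (S n)) (path_cost x y) L)
    as [p0 [Hp0 Hmin]]; [eauto|].
  exists (path_cost x y p0); split; eauto.
Qed.

Lemma dtw_eq0 x y : x <> [] -> y <> [] ->
  dtw x y = 0 <-> exists p, warping_path (length x) (length y) p /\ aligned x y p.
Proof.
  intros hx hy; unfold dtw.
  destruct (epsilon_spec (inhabits 0) (is_min_cost x y) (min_cost_exists x y hx hy))
    as [[p0 [Hp0 Hc0]] Hmin].
  set (c := epsilon _ _) in *.
  assert (Hc : 0 <= c) by (rewrite <- Hc0; apply path_cost_nonneg).
  split.
  - intros H; apply sqrt_eq_0 in H; [|exact Hc].
    exists p0; split; [exact Hp0 | apply path_cost_eq0; lra].
  - intros [p [Hp Hz]]; apply path_cost_eq0 in Hz; specialize (Hmin p Hp).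
    replace c with 0 by lra; apply sqrt_0.
Qed.

(** The walk along a zero-cost warping path: from equal heads, advance one or
    both series. *)
Inductive warp_equiv : ts -> ts -> Prop :=
| warp_equiv_single a : warp_equiv [a] [a]
| warp_equiv_step dx dy a x y : (dx <= 1)%nat -> (dy <= 1)%nat -> (1 <= dx + dy)%nat ->
    warp_equiv (skipn dx (a :: x)) (skipn dy (a :: y)) -> warp_equiv (a :: x) (a :: y).

Lemma at1_skipn x dx i : (1 + dx <= i)%nat -> at1 x i = at1 (skipn dx x) (i - dx).
Proof. intros H; unfold at1; rewrite nth_skipn; f_equal; lia. Qed.

Lemma warp_equiv_aligned_path x y : warp_equiv x y ->
  exists p, warping_path (length x) (length y) p /\ aligned x y p.
Proof.
  induction 1 as [a|dx dy a x y Hdx Hdy Hd _ [p [Hp Hz]]].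
  - exists [(1, 1)%nat]; split; [apply warping_path_single | repeat constructor].
  - rewrite !length_skipn in Hp.
    pose proof (warping_path_cons_shift _ _ _ _ _ Hdx Hdy Hd Hp) as Hp'.
    rewrite !Nat.sub_add in Hp' by (cbn [length]; lia).
    exists ((1, 1)%nat :: map (shift dx dy) p); split; [exact Hp'|].
    constructor; [reflexivity|].
    destruct Hp as [_ [_ [_ [_ Hr]]]].
    apply Forall_map; eapply Forall_impl; [|exact (Forall_and Hr Hz)].
    intros [i j]; simpl; intros [[Hi Hj] He].
    rewrite (at1_skipn _ dx), (at1_skipn (a :: y) dy) by lia.
    now rewrite !Nat.add_sub.
Qed.

Lemma aligned_path_warp_equiv k p x y : (length p <= k)%nat ->
  warping_path (length x) (length y) p -> aligned x y p -> warp_equiv x y.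
Proof.
  revert p x y; induction k as [|k IH]; intros p x y Hk Hp Hz.
  { destruct p; [now destruct Hp | simpl in Hk; lia]. }
  pose proof Hp as [Hne [Hhd [Hl [_ Hr]]]].
  destruct p as [|h0 q]; [congruence|]; simpl in Hhd; subst h0.
  inversion Hr as [|? ? H11 _]; subst; simpl in H11.
  destruct x as [|a x']; [simpl in H11; lia|]; destruct y as [|b y']; [simpl in H11; lia|].
  inversion Hz as [|? ? Hab Hzq]; subst; unfold at1 in Hab; simpl in Hab; subst b.
  destruct q as [|h r].
  - simpl in Hl; injection Hl as E1 E2.
    destruct x'; [|simpl in E1; lia]; destruct y'; [|simpl in E2; lia].
    constructor.
  - destruct (warping_path_uncons _ _ _ _ Hp) as [dx [dy [Hd [HQ Hp']]]].
    apply (warp_equiv_step dx dy); try lia.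
    apply (IH (map (unshift dx dy) (h :: r))).
    + rewrite length_map; simpl in Hk |- *; lia.
    + now rewrite !length_skipn.
    + apply Forall_map; eapply Forall_impl; [|exact (Forall_and HQ Hzq)].
      intros [i j]; simpl; intros [[Hi Hj] He].
      now rewrite <- (at1_skipn _ dx), <- (at1_skipn _ dy) by lia.
Qed.

Definition merge_cons (a : R) (l : ts) : ts :=
  match l with [] => [a] | b :: r => if Req_EM_T a b then b :: r else a :: b :: r end.

Lemma condense_cons a x : condense (a :: x) = merge_cons a (condense x).
Proof. reflexivity. Qed.

Lemma merge_cons_hd a l : exists r, merge_cons a l = a :: r.
Proof. destruct l as [|b r]; simpl; [|destruct (Req_EM_T a b) as [<-|]]; eauto. Qed.

Lemma merge_cons_same a r : merge_cons a (a :: r) = a :: r.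
Proof. simpl; now destruct (Req_EM_T a a). Qed.

Lemma merge_cons_diff a b r : a <> b -> merge_cons a (b :: r) = a :: b :: r.
Proof. intros H; simpl; now destruct (Req_EM_T a b). Qed.

Lemma merge_cons_idem a l : merge_cons a (merge_cons a l) = merge_cons a l.
Proof. destruct (merge_cons_hd a l) as [r ->]; apply merge_cons_same. Qed.

Lemma hd_error_condense x : hd_error (condense x) = hd_error x.
Proof.
  destruct x as [|a x]; [reflexivity|].
  rewrite condense_cons; now destruct (merge_cons_hd a (condense x)) as [r ->].
Qed.

Lemma condense_eq_nil x : condense x = [] -> x = [].
Proof.
  intros H; destruct x as [|a x]; [reflexivity|].
  pose proof (hd_error_condense (a :: x)) as Hd; now rewrite H in Hd.
Qed.

Lemma condense_cons_same a x : condense (a :: a :: x) = condense (a :: x).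
Proof. rewrite !(condense_cons a); apply merge_cons_idem. Qed.

Lemma condense_cons_fresh a x : hd_error x <> Some a -> condense (a :: x) = a :: condense x.
Proof.
  intros Hx; rewrite condense_cons.
  destruct (condense x) as [|b r] eqn:E; [reflexivity|].
  apply merge_cons_diff; intros <-; apply Hx; now rewrite <- hd_error_condense, E.
Qed.

Lemma irreducible_condense x : irreducible (condense x).
Proof.
  induction x as [|a x IH]; [exact I|]; rewrite condense_cons.
  destruct (condense x) as [|b r]; simpl; auto.
  destruct (Req_EM_T a b); simpl; auto.
Qed.

Lemma warp_equiv_condense x y : warp_equiv x y -> condense x = condense y.
Proof.
  induction 1 as [a|dx dy a x y Hdx Hdy Hd _ IH]; [reflexivity|].
  destruct dx as [|[|]], dy as [|[|]]; try lia; cbn [skipn] in IH.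
  - now rewrite (condense_cons a y), <- IH, (condense_cons a x), merge_cons_idem.
  - now rewrite (condense_cons a x), IH, (condense_cons a y), merge_cons_idem.
  - now rewrite !condense_cons, IH.
Qed.

Lemma condense_warp_equiv k x y : (length x + length y <= k)%nat -> x <> [] -> y <> [] ->
  condense x = condense y -> warp_equiv x y.
Proof.
  revert x y; induction k as [|k IH]; intros [|a x] [|b y] Hk Hx Hy He;
    try congruence; simpl in Hk; [lia|].
  assert (b = a) as ->.
  { pose proof (f_equal (@hd_error R) He) as H; rewrite !hd_error_condense in H; now injection H. }
  destruct (classic (hd_error x = Some a)) as [Hxa|Hxa].
  { destruct x as [|c x]; inversion Hxa; subst c.
    rewrite condense_cons_same in He.
    apply (warp_equiv_step 1 0); try lia.
    apply IH; cbn [skipn length] in *; auto; [lia | discriminate]. }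
  destruct (classic (hd_error y = Some a)) as [Hya|Hya].
  { destruct y as [|c y]; inversion Hya; subst c.
    rewrite condense_cons_same in He.
    apply (warp_equiv_step 0 1); try lia.
    apply IH; cbn [skipn length] in *; auto; [lia | discriminate]. }
  rewrite !condense_cons_fresh in He by assumption; injection He as He.
  destruct x as [|c x]; [rewrite (condense_eq_nil y (eq_sym He)); constructor|].
  destruct y as [|e y]; [discriminate (condense_eq_nil _ He)|].
  apply (warp_equiv_step 1 1); try lia.
  apply IH; cbn [skipn length] in *; auto; [lia | discriminate..].
Qed.

Lemma expansion_nil_inv y : expansion y [] -> y = [].
Proof. now intros [[|] [_ [_ ->]]]. Qed.

Lemma expansion_cons_repeat c k y z :
  expansion y z -> expansion (repeat c (S k) ++ y) (c :: z).
Proof.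
  intros [al [Hlen [Hal ->]]]; exists (S k :: al); simpl.
  repeat split; auto with arith.
Qed.

Lemma expansion_cons_inv y c z : expansion y (c :: z) ->
  exists k y', y = repeat c (S k) ++ y' /\ expansion y' z.
Proof.
  intros [[|[|k] al] [Hlen [Hal ->]]]; try discriminate; [now inversion Hal; lia|].
  inversion Hal; subst; exists k, (flat_map (fun pa => repeat (fst pa) (snd pa)) (combine z al)).
  split; [reflexivity|]; exists al; simpl in Hlen; auto.
Qed.

Lemma condense_repeat_app c k y : condense (repeat c (S k) ++ y) = merge_cons c (condense y).
Proof.
  induction k as [|k IH]; [reflexivity|].
  change (condense (c :: repeat c (S k) ++ y) = merge_cons c (condense y)).
  now rewrite condense_cons, IH, merge_cons_idem.
Qed.

Lemma expansion_condense y : expansion y (condense y).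
Proof.
  induction y as [|a y IH]; [now exists []|].
  rewrite condense_cons; destruct (condense y) as [|b r] eqn:E.
  - rewrite (expansion_nil_inv _ IH); apply (expansion_cons_repeat a 0 [] []); now exists [].
  - simpl; destruct (Req_EM_T a b) as [<-|_].
    + destruct (expansion_cons_inv _ _ _ IH) as [k [y' [-> Hy']]].
      exact (expansion_cons_repeat a (S k) y' r Hy').
    + exact (expansion_cons_repeat a 0 y _ IH).
Qed.

Lemma condense_expansion_irreducible y z :
  expansion y z -> irreducible z -> z <> [] -> condense y = z.
Proof.
  revert y; induction z as [|c z IH]; intros y Hy Hz Hne; [congruence|].
  destruct (expansion_cons_inv _ _ _ Hy) as [k [y' [-> Hy']]].
  rewrite condense_repeat_app; destruct z as [|d z].
  - now rewrite (expansion_nil_inv _ Hy').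
  - destruct Hz as [Hcd Hz]; rewrite (IH y' Hy' Hz) by discriminate.
    now apply merge_cons_diff.
Qed.

Theorem proposition2 (x : ts) (hx : is_ts x) :
  forall y : ts, is_ts y -> (dtw x y = 0 <-> expansion y (condense x)).
Proof.
  intros y hy; unfold is_ts in *; rewrite (dtw_eq0 x y hx hy); split.
  - intros [p [Hp Hz]].
    rewrite (warp_equiv_condense _ _ (aligned_path_warp_equiv _ _ _ _ (le_n _) Hp Hz)).
    apply expansion_condense.
  - intros He.
    assert (Hx : condense x <> []) by (intros H; apply hx, condense_eq_nil, H).
    apply warp_equiv_aligned_path, (condense_warp_equiv (length x + length y)); auto.
    symmetry; apply condense_expansion_irreducible; auto using irreducible_condense.
Qed.
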